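(* Let $(\mathbf A,\tau)$ be a subdirectly irreducible state-morphism algebra such that $\mathbf A$ is subdirectly reducible (i.e. not subdirectly irreducible). Then there is a subdirectly irreducible algebra $\mathbf B$ of the same type as $\mathbf A$ such that $(\mathbf A,\tau)$ is $\mathbf B$-subdiagonal, i.e. $(\mathbf A,\tau)$ embeds into the diagonal state-morphism algebra $D(\mathbf B)=(\mathbf B\times\mathbf B,\tau_B)$.
   Context: Let $F$ be an arbitrary algebraic type. A state-morphism on an algebra $\mathbf A$ of type $F$ is an endomorphism $\tau:\mathbf A\to\mathbf A$ with $\tau\circ\tau=\tau$; $(\mathbf A,\tau)$, viewed as an algebra of type $F$ extended by the unary operation $\tau$, is a state-morphism algebra, and subdirect irreducibility of $(\mathbf A,\tau)$ refers to this extended algebra. For an algebra $\mathbf B$ of type $F$, $D(\mathbf B)=(\mathbf B\times\mathbf B,\tau_B)$ with $\tau_B(x,y)=(x,x)$ is the diagonal state-morphism algebra; an embedding of state-morphism algebras is an injective homomorphism of type $F$ commuting with the unary operations. *)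

From mathcomp Require Import all_boot.
From Stdlib Require Import RelationClasses.

Set Implicit Arguments.
Unset Strict Implicit.
Unset Printing Implicit Defensive.

Record signature := Signature { sym : Type; arity : sym -> nat }.

Record algebra (F : signature) := Algebra {
  carrier :> Type;
  op : forall s : sym F, ('I_(arity s) -> carrier) -> carrier }.
Arguments op {F} _ _ _.

Definition is_hom {F : signature} (A B : algebra F) (f : A -> B) : Prop :=
  forall (s : sym F) (a : 'I_(arity s) -> A), f (op A s a) = op B s (fun i => f (a i)).

Definition is_congruence {F : signature} (A : algebra F) (R : A -> A -> Prop) : Prop :=
  Equivalence R /\
  forall (s : sym F) (a b : 'I_(arity s) -> A),
    (forall i, R (a i) (b i)) -> R (op A s a) (op A s b).

Arguments is_congruence {F} A R.
Arguments is_hom {F} A B f.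

Definition nontrivial_rel {T : Type} (R : T -> T -> Prop) : Prop :=
  exists x y, R x y /\ x <> y.

(* Subdirect irreducibility: A has a monolith, i.e. a least congruence
   among the congruences different from the identity (this forces A to be
   nontrivial). *)
Definition subdirectly_irreducible {F : signature} (A : algebra F) : Prop :=
  exists mu : A -> A -> Prop,
    is_congruence A mu /\ nontrivial_rel mu /\
    forall theta, is_congruence A theta -> nontrivial_rel theta ->
      forall x y, mu x y -> theta x y.

Arguments subdirectly_irreducible {F} A.

Definition ext_sig (F : signature) : signature :=
  Signature (fun o : option (sym F) => match o with Some s => arity s | None => 1 end).

Definition sm_alg {F : signature} (A : algebra F) (tau : A -> A) : algebra (ext_sig F) :=
  @Algebra (ext_sig F) A
    (fun o => match o return ('I_(@arity (ext_sig F) o) -> A) -> A with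
              | Some s => op A s
              | None => fun a => tau (a ord0)
              end).

Arguments sm_alg {F} A tau.

Definition state_morphism {F : signature} (A : algebra F) (tau : A -> A) : Prop :=
  is_hom A A tau /\ forall x, tau (tau x) = tau x.

Arguments state_morphism {F} A tau.

Definition prod_alg {F : signature} (B C : algebra F) : algebra F :=
  @Algebra F (B * C)%type
    (fun s a => (op B s (fun i => (a i).1), op C s (fun i => (a i).2))).

Arguments prod_alg {F} B C.

Definition diag_tau {F : signature} (B : algebra F) : prod_alg B B -> prod_alg B B :=
  fun p => (p.1, p.1).

Arguments diag_tau {F} B _.

Definition sm_embedding {F : signature} (A : algebra F) (tau : A -> A)
    (A' : algebra F) (tau' : A' -> A') (f : A -> A') : Prop :=
  injective f /\ is_hom A A' f /\ forall x, f (tau x) = tau' (f x).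
Arguments sm_embedding {F} A tau A' tau' f.

(* Let (a, b) be a pair with a <> b in the monolith of (A, tau).  By
   Zorn's lemma there is a congruence alpha of A maximal among those not
   relating a and b; every congruence of A strictly above alpha relates a and
   b, so A/alpha is subdirectly irreducible.  The map x |-> (tau x/alpha, x/alpha)
   is a homomorphism of state-morphism algebras into D(A/alpha).  Its kernel
   {(x, y) | alpha x y /\ alpha (tau x) (tau y)} is a congruence of (A, tau)
   that does not relate a and b, so it does not contain the monolith and is
   therefore the identity. *)

From mathcomp Require Import all_boot.
From mathcomp Require Import boolp classical_sets.

Set Implicit Arguments.
Unset Strict Implicit.

Local Open Scope classical_set_scope.

Lemma is_hom_comp (F : signature) (A B C : algebra F) (f : A -> B) (g : B -> C) :
  is_hom A B f -> is_hom B C g -> is_hom A C (g \o f).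
Proof. by move=> homf homg s a; rewrite /= homf homg. Qed.

Lemma is_hom_pair (F : signature) (A B C : algebra F) (f : A -> B) (g : A -> C) :
  is_hom A B f -> is_hom A C g -> is_hom A (prod_alg B C) (fun x => (f x, g x)).
Proof. by move=> homf homg s a; rewrite /= homf homg. Qed.

Lemma is_congruence_preimage (F : signature) (A B : algebra F) (f : A -> B)
    (theta : B -> B -> Prop) :
  is_hom A B f -> is_congruence B theta ->
  is_congruence A (fun x y => theta (f x) (f y)).
Proof.
move=> homf [[refl sym trans] comp]; split; first split.
- by move=> x; apply: refl.
- by move=> x y; apply: sym.
- by move=> x y z; apply: trans.
- by move=> s a b ab; rewrite !homf; apply: comp.
Qed.

Lemma is_congruence_meet (F : signature) (A : algebra F) (R S : A -> A -> Prop) :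
  is_congruence A R -> is_congruence A S ->
  is_congruence A (fun x y => R x y /\ S x y).
Proof.
move=> [[rR sR tR] cR] [[rS sS tS] cS]; split; first split.
- by move=> x; split; [apply: rR | apply: rS].
- by move=> x y [Rxy Sxy]; split; [apply: sR | apply: sS].
- by move=> x y z [Rxy Sxy] [Ryz Syz]; split; [apply: tR Ryz | apply: tS Syz].
- by move=> s a b ab; split; [apply: cR | apply: cS] => i; case: (ab i).
Qed.

Lemma is_congruence_sm_alg (F : signature) (A : algebra F) (tau : A -> A)
    (R : A -> A -> Prop) :
  is_congruence A R -> (forall x y, R x y -> R (tau x) (tau y)) ->
  is_congruence (sm_alg A tau) R.
Proof.
by move=> [eqR compR] tauR; split=> // [[s|]] a b ab; [apply: compR | apply: tauR].
Qed.

Lemma subdirectly_irreducible_of_pair (F : signature) (B : algebra F) (u v : B) :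
  u <> v ->
  (forall theta, is_congruence B theta -> nontrivial_rel theta -> theta u v) ->
  subdirectly_irreducible B.
Proof.
move=> uv least.
pose mu x y := forall theta, is_congruence B theta -> nontrivial_rel theta -> theta x y.
exists mu; split; last split.
- split; first split.
  + by move=> x theta [[refl _ _] _] _; apply: refl.
  + by move=> x y xy theta thC nt; case: (thC) => [[_ sym _] _]; apply: sym; apply: xy.
  + move=> x y z xy yz theta thC nt; case: (thC) => [[_ _ trans] _].
    exact: trans (xy _ thC nt) (yz _ thC nt).
  + by move=> s a b ab theta thC nt; case: (thC) => [_ comp]; apply: comp => i; apply: ab.
- by exists u, v; split=> // theta; apply: least.
- by move=> theta thC nt x y; apply.
Qed.

Definition maximal_separating (F : signature) (A : algebra F) (alpha : A -> A -> Prop)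
    (a b : A) : Prop :=
  ~ alpha a b /\
  forall theta, is_congruence A theta -> (forall x y, alpha x y -> theta x y) ->
    ~ theta a b -> forall x y, theta x y -> alpha x y.

Section Quotient.
Variables (F : signature) (A : algebra F) (alpha : A -> A -> Prop).

Definition quot_type := {P : A -> Prop | exists x, P = alpha x}.

Definition qclass (x : A) : quot_type := exist _ (alpha x) (ex_intro _ x erefl).

Definition qrepr (q : quot_type) : A :=
  proj1_sig (cid (proj2_sig q)).

Definition quot_alg : algebra F :=
  @Algebra F quot_type (fun s q => qclass (op A s (fun i => qrepr (q i)))).

Hypothesis alphaC : is_congruence A alpha.

Lemma qclass_eq x y : qclass x = qclass y <-> alpha x y.
Proof.
have [[refl sym trans] _] := alphaC.
split=> [/(f_equal (@proj1_sig _ _)) /= -> | xy]; first exact: refl.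
apply: eq_exist; apply: funext => z; apply: propext.
by split=> [xz | yz]; [apply: trans (sym _ _ xy) xz | apply: trans xy yz].
Qed.

Lemma qreprK q : qclass (qrepr q) = q.
Proof.
by case: q => P hP; apply: eq_exist; rewrite [P in _ = P](proj2_sig (cid hP)).
Qed.

Lemma qclass_hom : is_hom A quot_alg qclass.
Proof.
move=> s a /=; apply/qclass_eq; case: alphaC => _ comp; apply: comp => i.
by apply/qclass_eq; rewrite qreprK.
Qed.

Lemma quot_subdirectly_irreducible (a b : A) :
  maximal_separating alpha a b -> subdirectly_irreducible quot_alg.
Proof.
move=> [ab alpha_max].
apply: (@subdirectly_irreducible_of_pair _ quot_alg (qclass a) (qclass b)).
  by move/qclass_eq.
move=> theta thC [q1 [q2 [th12 q12]]]; apply: contrapT => thab.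
have th_pre := is_congruence_preimage qclass_hom thC.
have alpha_th x y : alpha x y -> theta (qclass x) (qclass y).
  by move/qclass_eq=> ->; case: thC => [[refl _ _] _].
apply: q12; rewrite -(qreprK q1) -(qreprK q2); apply/qclass_eq.
by apply: (alpha_max _ th_pre alpha_th thab); rewrite !qreprK.
Qed.

End Quotient.

(* Congruences are encoded by sets of pairs modulo the diagonal, so that the
   union of the empty chain is still a congruence (the identity). *)
Definition refl_closure (T : Type) (S : set (T * T)) (x y : T) : Prop :=
  x = y \/ S (x, y).

Lemma chain_upper_bound (T : Type) (C : set (set T)) (X Y : set T) :
  total_on C subset -> C X -> C Y -> exists2 Z, C Z & X `<=` Z /\ Y `<=` Z.
Proof.
by move=> tot CX CY; case: (tot _ _ CX CY) => sub; [exists Y | exists X] => //; split.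
Qed.

Lemma chain_upper_bound_finite (T : Type) (C : set (set T)) (D : set T) :
  total_on C subset -> forall n (p : 'I_n -> T),
  (forall i, D (p i) \/ exists2 X, C X & X (p i)) ->
  (forall i, D (p i)) \/ exists2 X, C X & forall i, D (p i) \/ X (p i).
Proof.
move=> tot; elim=> [|n IH] p p_in; first by left; case.
have lift_case (Q : 'I_n.+1 -> Prop) :
    Q ord0 -> (forall j, Q (lift ord0 j)) -> forall i, Q i.
  by move=> Q0 Qlift i; case: (unliftP ord0 i) => [j ->| ->].
case: (IH (p \o lift ord0) (fun j => p_in _)) => [allD | [X CX Xp]];
  case: (p_in ord0) => [D0 | [Y CY Y0]].
- by left; apply: lift_case.
- by right; exists Y => //; apply: lift_case => [|j]; [right | left; apply: allD].
- by right; exists X => //; apply: lift_case; [left | apply: Xp].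
- have [Z CZ [XZ YZ]] := chain_upper_bound tot CX CY.
  right; exists Z => //; apply: lift_case; first by right; apply: YZ.
  by move=> j; case: (Xp j) => [?|/XZ]; [left | right].
Qed.

Lemma refl_closure_bigcup_chain (F : signature) (A : algebra F) (C : set (set (A * A))) :
  total_on C subset -> (forall X, C X -> is_congruence A (refl_closure X)) ->
  is_congruence A (refl_closure (\bigcup_(X in C) X)).
Proof.
move=> tot congC.
have in_bigcup X x y : C X -> refl_closure X x y -> refl_closure (\bigcup_(X in C) X) x y.
  by move=> CX [->|Xxy]; [left | right; exists X].
split; first split.
- by move=> x; left.
- move=> x y [->|[X CX Xxy]]; first by left.
  by apply: (in_bigcup X) => //; case: (congC X CX) => [[_ sym _] _]; apply: sym; right.
- move=> x y z [->|[X CX Xxy]] // [<-|[Y CY Yyz]]; first by right; exists X.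
  have [Z CZ [XZ YZ]] := chain_upper_bound tot CX CY.
  apply: (in_bigcup Z) => //; case: (congC Z CZ) => [[_ _ trans] _].
  by apply: (trans _ y); right; [apply: XZ | apply: YZ].
- move=> s a b ab.
  have ab' i : a i = b i \/ exists2 X, C X & X (a i, b i).
    by case: (ab i) => [->|[X CX Xab]]; [left | right; exists X].
  have := chain_upper_bound_finite (D := fun p => p.1 = p.2)
    (p := fun i => (a i, b i)) tot ab'.
  case=> [eq_ab | [X CX Xab]].
    by left; congr (op A s); apply: funext.
  by apply: (in_bigcup X) => //; case: (congC X CX) => _ comp; apply: comp.
Qed.

Lemma exists_maximal_separating_congruence (F : signature) (A : algebra F) (a b : A) :
  a <> b ->
  exists alpha, is_congruence A alpha /\ maximal_separating alpha a b.
Proof.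
move=> ab.
pose P (S : set (A * A)) := is_congruence A (refl_closure S) /\ ~ S (a, b).
have [S0 [[S0C S0ab] S0max]] : exists S0, P S0 /\ forall S, S0 `<` S -> ~ P S.
  apply: Zorn_bigcup => C CP tot; split.
    by apply: refl_closure_bigcup_chain => // X /CP [].
  by case=> X /CP [].
exists (refl_closure S0); split; first by [].
split; first by case.
move=> theta thC S0_th thab x y thxy.
pose S (p : A * A) := theta p.1 p.2.
have S_th u v : refl_closure S u v <-> theta u v.
  by split=> [[->|] //|]; [case: thC => [[refl _ _] _] | right].
have SC : is_congruence A (refl_closure S).
  case: thC => [[refl sym trans] comp]; split; first split.
  - by move=> u; left.
  - by move=> u v /S_th /sym /S_th.
  - by move=> u v w /S_th uv /S_th vw; apply/S_th; apply: trans vw.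
  - by move=> s u v uv; apply/S_th; apply: comp => i; apply/S_th.
have S0S : S0 `<=` S by case=> u v S0uv; apply: S0_th; right.
have SS0 : S `<=` S0.
  by apply: contrapT => nSS0; apply: (S0max S); split.
by right; apply: SS0.
Qed.

Theorem theorem3p6 (F : signature) (A : algebra F) (tau : A -> A) :
  state_morphism A tau ->
  subdirectly_irreducible (sm_alg A tau) ->
  ~ subdirectly_irreducible A ->
  exists B : algebra F, subdirectly_irreducible B /\
    exists f : A -> prod_alg B B, sm_embedding A tau (prod_alg B B) (diag_tau B) f.
Proof.
move=> [tau_hom tau_idem] [mu [_ [[a [b [mu_ab ab]]] mu_least]]] _.
have [alpha [alphaC alpha_max]] := exists_maximal_separating_congruence (A := A) ab.
exists (quot_alg alpha); split; first exact: quot_subdirectly_irreducible alpha_max.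
exists (fun x => (qclass alpha (tau x), qclass alpha x)); split; last split.
- pose kernel x y := alpha x y /\ alpha (tau x) (tau y).
  have kernelC : is_congruence (sm_alg A tau) kernel.
    apply: is_congruence_sm_alg => [|x y [_ ?]]; last by rewrite /kernel !tau_idem.
    exact: is_congruence_meet alphaC (is_congruence_preimage tau_hom alphaC).
  move=> x y /pair_equal_spec [/(qclass_eq alphaC) tau_xy /(qclass_eq alphaC) xy].
  apply: contrapT => nxy; have kernel_nt : nontrivial_rel kernel by exists x, y.
  by case: alpha_max => alpha_ab _; case: (mu_least kernel kernelC kernel_nt a b mu_ab).
- apply: is_hom_pair (qclass_hom alphaC).
  exact: is_hom_comp tau_hom (qclass_hom alphaC).
- by move=> x; rewrite /diag_tau /= tau_idem.
Qed.
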